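(* Let $A=(a_{ij})_{i,j=1}^n$ be the weighted adjacency matrix of a (possibly directed) graph on vertices $v_1,\dots,v_n$, with nonnegative entries, such that every out-degree $o(v_i)=\sum_{j=1}^n a_{ij}$ is positive. Let $D_o=\operatorname{diag}(o(v_1),\dots,o(v_n))$ and $P=D_o^{-1}A$. Define $\nu(v_j)=\sum_{\ell=1}^n p_{\ell j}$, assume $\nu(v_j)>0$ for all $j$, and let $D_\nu=\operatorname{diag}(\nu(v_1),\dots,\nu(v_n))$. Then the matrix $Q=P D_\nu^{-1} P^\top$ is doubly stochastic.
   Context: $P$ is the row-stochastic transition matrix of the random walk on the graph ($p_{ij}$ is the probability of moving from $v_i$ to $v_j$ in one step). The condition $\nu(v_j)>0$ means every vertex has at least one incoming edge (e.g., ensured by adding self-loops), so that $D_\nu$ is invertible. A doubly stochastic matrix is a nonnegative matrix whose rows and columns each sum to $1$. *)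

From mathcomp Require Import all_boot all_order all_algebra.
Set Implicit Arguments. Unset Strict Implicit. Unset Printing Implicit Defensive.
Import Order.TTheory GRing.Theory Num.Theory.
Local Open Scope ring_scope.

Definition outdeg (R : numFieldType) (n : nat) (A : 'M[R]_n) (i : 'I_n) : R :=
  \sum_(j < n) A i j.

Definition Do (R : numFieldType) (n : nat) (A : 'M[R]_n) : 'M[R]_n :=
  diag_mx (\row_i outdeg A i).

Definition transP (R : numFieldType) (n : nat) (A : 'M[R]_n) : 'M[R]_n :=
  invmx (Do A) *m A.

Definition nu (R : numFieldType) (n : nat) (A : 'M[R]_n) (j : 'I_n) : R :=
  \sum_(l < n) transP A l j.

Definition Dnu (R : numFieldType) (n : nat) (A : 'M[R]_n) : 'M[R]_n :=
  diag_mx (\row_j nu A j).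

Definition Qmat (R : numFieldType) (n : nat) (A : 'M[R]_n) : 'M[R]_n :=
  transP A *m invmx (Dnu A) *m (transP A)^T.

Definition doubly_stochastic (R : numFieldType) (n : nat) (M : 'M[R]_n) : Prop :=
  (forall i j, 0 <= M i j) /\
  (forall i, \sum_(j < n) M i j = 1) /\
  (forall j, \sum_(i < n) M i j = 1).

From mathcomp Require Import all_boot all_order all_algebra.
Set Implicit Arguments. Unset Strict Implicit. Unset Printing Implicit Defensive.
Import Order.TTheory GRing.Theory Num.Theory.
Local Open Scope ring_scope.

(* Write c_j for the column sums of P.  The (i, k) entry of P diag(c)^-1 P^T is
   sum_j p_ij p_kj / c_j, so summing over k cancels c_j and leaves the i-th row
   sum of P, which is 1 for P = D_o^-1 A.  As Q is symmetric, its column sums are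
   its row sums, and it is nonnegative as a product of nonnegative matrices. *)

Lemma invmx_diag (F : fieldType) n (d : 'I_n -> F) :
  (forall j, d j != 0) ->
  invmx (diag_mx (\row_j d j)) = diag_mx (\row_j (d j)^-1).
Proof.
move=> d_neq0.
have inv_diag : diag_mx (\row_j (d j)^-1) *m diag_mx (\row_j d j) = 1%:M.
  rewrite mulmx_diag -diag_const_mx; congr diag_mx; apply/rowP=> j.
  by rewrite !mxE mulVf.
have [_ d_unit] := mulmx1_unit inv_diag.
by rewrite -[RHS]mulmx1 -(mulmxV d_unit) mulmxA inv_diag mul1mx.
Qed.

Lemma mul_diag_trmxE (R : comPzSemiRingType) m n (P : 'M[R]_(m, n))
    (d : 'I_n -> R) i k :
  (P *m diag_mx (\row_j d j) *m P^T) i k = \sum_j P i j * d j * P k j.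
Proof. by rewrite mul_mx_diag mxE; apply: eq_bigr => j _; rewrite !mxE. Qed.

Lemma trmx_mul_sym_trmx (R : comPzSemiRingType) m n (P : 'M[R]_(m, n))
    (S : 'M[R]_n) :
  S^T = S -> (P *m S *m P^T)^T = P *m S *m P^T.
Proof. by move=> S_sym; rewrite !trmx_mul trmxK S_sym mulmxA. Qed.

Lemma sum_row_mul_invcolsum_trmx (F : fieldType) m n (P : 'M[F]_(m, n)) :
  (forall j, \sum_l P l j != 0) ->
  forall i, \sum_k (P *m invmx (diag_mx (\row_j \sum_l P l j)) *m P^T) i k
            = \sum_j P i j.
Proof.
move=> colsum_neq0 i; rewrite invmx_diag //.
under eq_bigr do rewrite mul_diag_trmxE.
rewrite exchange_big /=; apply: eq_bigr => j _.
by rewrite -mulr_sumr mulfVK.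
Qed.

Section RandomWalk.

Context {R : realFieldType} {n : nat} {A : 'M[R]_n}.
Hypothesis outdeg_gt0 : forall i, 0 < outdeg A i.

Lemma transPE i j : transP A i j = (outdeg A i)^-1 * A i j.
Proof.
rewrite /transP /Do invmx_diag => [|k]; last by rewrite gt_eqF.
by rewrite mul_diag_mx !mxE.
Qed.

Lemma transP_ge0 : (forall i j, 0 <= A i j) -> forall i j, 0 <= transP A i j.
Proof. by move=> A_ge0 i j; rewrite transPE mulr_ge0 // invr_ge0 ltW. Qed.

Lemma sum_row_transP i : \sum_j transP A i j = 1.
Proof.
under eq_bigr do rewrite transPE.
by rewrite -mulr_sumr mulVf // gt_eqF.
Qed.

End RandomWalk.

Theorem mainTheorem1 (R : realFieldType) (n : nat) (A : 'M[R]_n)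
  (hA : forall i j, 0 <= A i j)
  (ho : forall i, 0 < outdeg A i)
  (hnu : forall j, 0 < nu A j) :
  doubly_stochastic (Qmat A).
Proof.
have nu_neq0 j : nu A j != 0 by rewrite gt_eqF.
have P_ge0 := transP_ge0 ho hA.
have row_sum i : \sum_j Qmat A i j = 1.
  by rewrite (sum_row_mul_invcolsum_trmx nu_neq0) sum_row_transP.
have Q_sym : (Qmat A)^T = Qmat A.
  by rewrite trmx_mul_sym_trmx // trmx_inv tr_diag_mx.
split; [|split=> //].
- move=> i k; rewrite /Qmat /Dnu invmx_diag // mul_diag_trmxE sumr_ge0 // => j _.
  by rewrite !mulr_ge0 // invr_ge0 ltW.
- move=> k; rewrite -[RHS](row_sum k); apply: eq_bigr => i _.
  by rewrite -[in LHS]Q_sym mxE.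
Qed.
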